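(* Let $\mathbb{K}$ be a field and $\alpha_1,\dots,\alpha_n\in\mathbb{K}^*$. If $n$ is even, then $X_{\mathbb{A}_n}(\alpha_1,\dots,\alpha_n)\simeq X_{\mathbb{A}_n}(1,1,\dots,1)$. If $n$ is odd, then $X_{\mathbb{A}_n}(\alpha_1,\dots,\alpha_n)\simeq X_{\mathbb{A}_n}(\alpha,1,\dots,1)$ for some $\alpha\in\mathbb{K}^*$ depending only on the $\alpha_i$ with $i$ odd.
   Context: $X_{\mathbb{A}_n}(\alpha_1,\dots,\alpha_n)$ is the affine variety over $\mathbb{K}$ in the variables $x_1,\dots,x_n,x'_1,\dots,x'_n$ defined by $x_1x'_1=1+\alpha_1x_2$, $x_ix'_i=1+\alpha_i x_{i-1}x_{i+1}$ for $2\le i\le n-1$, and $x_nx'_n=1+\alpha_nx_{n-1}$ (for $n=1$: $x_1x'_1=1+\alpha_1$). *)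

From HB Require Import structures.
From mathcomp Require Import all_boot all_order all_algebra.
From mathcomp Require Import mpoly.
Set Implicit Arguments. Unset Strict Implicit. Unset Printing Implicit Defensive.
Import Order.TTheory GRing.Theory Num.Theory.
Local Open Scope ring_scope.

(* Polynomial ring K[x_1..x_n, x'_1..x'_n] = {mpoly K[n + n]}:
   x_i is variable (lshift n i), x'_i is variable (rshift n i) (0-based i). *)
Definition xv (K : fieldType) (n : nat) (i : 'I_n) : {mpoly K[n + n]} :=
  'X_(lshift n i).
Definition xpv (K : fieldType) (n : nat) (i : 'I_n) : {mpoly K[n + n]} :=
  'X_(rshift n i).

Definition An_gen (K : fieldType) (n : nat) (alpha : 'I_n -> K) (i : 'I_n)
  : {mpoly K[n + n]} :=
  xv K i * xpv K i - 1
  - (alpha i)%:MP * \prod_(j < n | ((j == i.+1 :> nat) || (i == j.+1 :> nat))) xv K j.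

Definition in_ideal (K : fieldType) (m k : nat) (gs : 'I_k -> {mpoly K[m]})
  (p : {mpoly K[m]}) : Prop :=
  exists c : 'I_k -> {mpoly K[m]}, p = \sum_(i < k) c i * gs i.

(* X_{A_n}(alpha) ~= X_{A_n}(beta) as affine K-varieties (K-schemes), i.e. their
   coordinate rings K[x,x']/I are isomorphic as K-algebras. Written out:
   polynomial maps F (inducing K[X]/I_alpha -> K[X]/I_beta, X_k |-> F_k) and
   G (inducing K[X]/I_beta -> K[X]/I_alpha, X_k |-> G_k) which are well defined
   and mutually inverse. *)
Definition An_iso (K : fieldType) (n : nat) (alpha beta : 'I_n -> K) : Prop :=
  exists F G : (n + n).-tuple {mpoly K[n + n]},
    [/\ (forall i, in_ideal (An_gen beta) (comp_mpoly F (An_gen alpha i))),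
        (forall i, in_ideal (An_gen alpha) (comp_mpoly G (An_gen beta i))),
        (forall k, in_ideal (An_gen alpha) (comp_mpoly G (tnth F k) - 'X_k))
      & (forall k, in_ideal (An_gen beta) (comp_mpoly F (tnth G k) - 'X_k))].

From mathcomp Require Import all_boot all_order all_algebra.
From mathcomp Require Import mpoly.
From mathcomp Require Import zify.
Set Implicit Arguments. Unset Strict Implicit. Unset Printing Implicit Defensive.
Import GRing.Theory.
Local Open Scope ring_scope.

(* The substitution x_i |-> d_i x_i, x'_i |-> d_i^-1 x'_i (all d_i nonzero) is
   an automorphism of K[x, x'] carrying the equations of X(alpha) to those of
   X(beta), where beta_i = alpha_i prod_{j ~ i} d_j.  With indices 0 .. n-1 and
   e_{j+1} := d_j, asking beta_i = 1 for all i becomes e_i e_{i+2} = alpha_i^-1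
   (0 <= i < n) with e_0 = e_{n+1} = 1.  These equations split into two chains
   along the parity classes, each solved by alternating quotients from one end.
   For n even the two boundary values lie on different chains and both can be
   imposed.  For n odd they lie on the same chain: imposing e_{n+1} = 1 forces
   e_0, so beta_i = 1 holds only for i > 0, while beta_0 = e_0^-1 involves only
   the alpha_i with i even (odd in 1-based indexing). *)

Definition path_adj (i j : nat) : bool := (j == i.+1) || (i == j.+1).

Lemma prod_path_adj (R : comPzRingType) (f : nat -> R) (i n : nat) :
  \prod_(j < n | path_adj i j) f j =
  (if (0 < i)%N && (i.-1 < n)%N then f i.-1 else 1) *
  (if (i.+1 < n)%N then f i.+1 else 1).
Proof.
elim: n => [|n IHn]; first by rewrite big_ord0 !andbF mulr1.
rewrite big_mkcond big_ord_recr /= -big_mkcond /= IHn /path_adj.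
repeat (case: ifP => /= ?); rewrite ?mulr1 ?mul1r //; try (exfalso; lia).
all: by do ?congr (_ * _); congr f; lia.
Qed.

Section QuotChain.
Variable K : fieldType.
Implicit Type a : nat -> K.

Fixpoint quot_chain a (j : nat) : K :=
  if j is j'.+2 then a j' / quot_chain a j' else 1.

Lemma quot_chain_neq0 a : (forall k, a k != 0) -> forall j, quot_chain a j != 0.
Proof.
move=> a_neq0; elim/ltn_ind=> -[|[|j]] IHj /=; rewrite ?oner_eq0 //.
by rewrite mulf_neq0 ?invr_eq0 ?IHj.
Qed.

Lemma quot_chainSS a (a_neq0 : forall k, a k != 0) j :
  quot_chain a j.+2 * quot_chain a j = a j.
Proof. by rewrite /= mulfVK ?quot_chain_neq0. Qed.

Lemma eq_quot_chain a b j :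
  (forall k, odd k = odd j -> a k = b k) -> quot_chain a j = quot_chain b j.
Proof.
elim/ltn_ind: j => -[|[|j]] // IHj eq_ab /=.
have eq_ab_j k : odd k = odd j -> a k = b k by rewrite -[odd j]negbK; apply: eq_ab.
by rewrite eq_ab_j // IHj.
Qed.

End QuotChain.

Lemma in_ideal_gen (K : fieldType) m k (gs : 'I_k -> {mpoly K[m]}) i :
  in_ideal gs (gs i).
Proof.
exists (fun j => (j == i)%:R); rewrite (bigD1 i) //= eqxx mul1r big1 ?addr0 //.
by move=> j /negbTE ->; rewrite mul0r.
Qed.

Lemma in_ideal0 (K : fieldType) m k (gs : 'I_k -> {mpoly K[m]}) :
  in_ideal gs 0.
Proof. by exists (fun _ => 0); rewrite big1 // => j _; rewrite mul0r. Qed.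

Section Rescale.
Variables (K : fieldType) (n : nat).
Implicit Types d e alpha beta : 'I_n -> K.

Definition scale_coef d (k : 'I_(n + n)) : K :=
  match split k with inl i => d i | inr i => (d i)^-1 end.

Definition rescale d : (n + n).-tuple {mpoly K[n + n]} :=
  [tuple (scale_coef d k)%:MP * 'X_k | k < n + n].

Lemma scale_coef_lshift d i : scale_coef d (lshift n i) = d i.
Proof. by rewrite /scale_coef -[lshift n i]/(unsplit (inl i)) unsplitK. Qed.

Lemma scale_coef_rshift d i : scale_coef d (rshift n i) = (d i)^-1.
Proof. by rewrite /scale_coef -[rshift n i]/(unsplit (inr i)) unsplitK. Qed.

Lemma comp_rescaleX d k :
  comp_mpoly (rescale d) 'X_k = (scale_coef d k)%:MP * 'X_k.
Proof. by rewrite comp_mpolyXU -tnth_nth tnth_mktuple. Qed.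

Lemma rescaleK d e : (forall i, d i * e i = 1) ->
  forall k, comp_mpoly (rescale e) (tnth (rescale d) k) = 'X_k.
Proof.
move=> de1 k; rewrite tnth_mktuple rmorphM /= comp_mpolyC comp_rescaleX.
rewrite mulrA -mpolyCM /scale_coef; case: split => i.
  by rewrite de1 mpolyC1 mul1r.
by rewrite -invfM de1 invr1 mpolyC1 mul1r.
Qed.

Lemma comp_rescale_An_gen d alpha beta : (forall i, d i != 0) ->
    (forall i, beta i = alpha i * \prod_(j < n | path_adj i j) d j) ->
  forall i, comp_mpoly (rescale d) (An_gen alpha i) = An_gen beta i.
Proof.
move=> d_neq0 def_beta i.
rewrite /An_gen /xv /xpv !rmorphB /= rmorph1 !rmorphM /= comp_mpolyC.
rewrite rmorph_prod /= !comp_rescaleX scale_coef_lshift scale_coef_rshift.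
under eq_bigr => j _ do rewrite comp_rescaleX scale_coef_lshift.
have dK : (d i)%:MP * (d i)^-1%:MP = 1 :> {mpoly K[n + n]}.
  by rewrite -mpolyCM mulfV ?mpolyC1.
by rewrite big_split /= -rmorph_prod def_beta mpolyCM mulrACA dK mul1r mulrA.
Qed.

Lemma An_iso_rescale d alpha beta : (forall i, d i != 0) ->
    (forall i, beta i = alpha i * \prod_(j < n | path_adj i j) d j) ->
  An_iso alpha beta.
Proof.
move=> d_neq0 def_beta; pose e i := (d i)^-1.
have e_neq0 i : e i != 0 by rewrite invr_eq0.
have def_alpha i : alpha i = beta i * \prod_(j < n | path_adj i j) e j.
  by rewrite def_beta prodfV mulfK //; apply/prodf_neq0.
exists (rescale d), (rescale e); split=> [i|i|k|k].
- by rewrite (comp_rescale_An_gen d_neq0 def_beta); apply: in_ideal_gen.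
- by rewrite (comp_rescale_An_gen e_neq0 def_alpha); apply: in_ideal_gen.
- by rewrite rescaleK ?subrr => [|i]; [apply: in_ideal0 | apply: mulfV].
- by rewrite rescaleK ?subrr => [|i]; [apply: in_ideal0 | apply: mulVf].
Qed.

End Rescale.

Section PathScale.
Variables (K : fieldType) (m : nat).
Implicit Type alpha : 'I_m.+1 -> K.

Definition inv_coef alpha (j : nat) : K := (alpha (inord j))^-1.

(* The e_j of the header; the chain through m.+2 is computed backwards. *)
Definition path_scale alpha (j : nat) : K :=
  if odd (m.+2 - j) then quot_chain (inv_coef alpha) j
  else quot_chain (fun k => inv_coef alpha (m - k)) (m.+2 - j).

Lemma path_scale_neq0 alpha : (forall i, alpha i != 0) ->
  forall j, path_scale alpha j != 0.
Proof.
move=> alpha_neq0 j.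
by rewrite /path_scale; case: ifP => _; apply: quot_chain_neq0 => k;
  rewrite invr_eq0.
Qed.

Lemma path_scale_mulSS alpha (alpha_neq0 : forall i, alpha i != 0) i :
  (i < m.+1)%N -> path_scale alpha i * path_scale alpha i.+2 = inv_coef alpha i.
Proof.
move=> lt_i_m; have inv_neq0 k : inv_coef alpha k != 0 by rewrite invr_eq0.
rewrite /path_scale (_ : m.+2 - i = (m - i).+2)%N; last by lia.
rewrite (_ : m.+2 - i.+2 = m - i)%N; last by lia.
rewrite !oddS negbK.
case: ifP => _; first by rewrite mulrC quot_chainSS.
by rewrite quot_chainSS // subKn //; lia.
Qed.

Lemma path_scale_nbr alpha (alpha_neq0 : forall i, alpha i != 0) (i : 'I_m.+1) :
  alpha i * \prod_(j < m.+1 | path_adj i j) path_scale alpha j.+1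
  = if val i == 0%N then (path_scale alpha 0)^-1 else 1.
Proof.
have ps_neq0 := path_scale_neq0 alpha_neq0.
have alphaK k : alpha k * inv_coef alpha k = 1 by rewrite /inv_coef inord_val mulfV.
rewrite (prod_path_adj (fun j => path_scale alpha j.+1)).
have -> : (if (i.+1 < m.+1)%N then path_scale alpha i.+2 else 1) =
          path_scale alpha i.+2.
  case: ltnP => // le_m_i; rewrite (_ : i.+2 = m.+2) ?/path_scale ?subnn //.
  by have := ltn_ord i; lia.
case: i => [[|i] lt_i_m] /=.
  rewrite mul1r -[X in alpha _ * X](mulKf (ps_neq0 0)) path_scale_mulSS //.
  by rewrite mulrCA (alphaK (Ordinal lt_i_m)) mulr1.
by rewrite (ltnW lt_i_m) path_scale_mulSS // (alphaK (Ordinal lt_i_m)).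
Qed.

Lemma path_scale0_odd alpha : odd m -> path_scale alpha 0 = 1.
Proof. by move=> m_odd; rewrite /path_scale subn0 /= m_odd. Qed.

Lemma eq_path_scale0 alpha beta :
  (forall i : 'I_m.+1, ~~ odd i -> alpha i = beta i) ->
  path_scale alpha 0 = path_scale beta 0.
Proof.
move=> eq_even; rewrite /path_scale subn0; case: ifP => // _.
apply: eq_quot_chain => k /=; rewrite negbK => odd_k.
rewrite /inv_coef eq_even // inordK; last by lia.
have [le_k_m|lt_m_k] := leqP k m; first by rewrite oddB // odd_k addbb.
by rewrite (_ : m - k = 0)%N //; lia.
Qed.

Lemma An_iso_path_scale alpha (beta : 'I_m.+1 -> K) :
    (forall i, alpha i != 0) ->
    (forall i : 'I_m.+1, beta i = if val i == 0%N then (path_scale alpha 0)^-1 else 1) ->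
  An_iso alpha beta.
Proof.
move=> alpha_neq0 def_beta.
apply: (An_iso_rescale (d := fun j : 'I_m.+1 => path_scale alpha j.+1)) => [j|i].
  exact: path_scale_neq0.
by rewrite def_beta path_scale_nbr.
Qed.

End PathScale.

Theorem mainTheorem5 (K : fieldType) (n : nat) (hn : (0 < n)%N) :
  (~~ odd n ->
     forall alpha : 'I_n -> K, (forall i, alpha i != 0) ->
       An_iso alpha (fun _ => 1))
  /\
  (odd n ->
     exists A : ('I_n -> K) -> K,
       (forall alpha beta : 'I_n -> K,
          (forall i : 'I_n, ~~ odd i -> alpha i = beta i) -> A alpha = A beta)
       /\
       (forall alpha : 'I_n -> K, (forall i, alpha i != 0) ->
          A alpha != 0 /\
          An_iso alpha (fun i : 'I_n => if val i == 0%N then A alpha else 1))).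
Proof.
case: n hn => [//|m] _; split=> [n_even alpha alpha_neq0 | _].
  have m_odd : odd m by rewrite -[odd m]negbK.
  by apply: An_iso_path_scale => // i; rewrite path_scale0_odd // invr1 if_same.
exists (fun alpha => (path_scale alpha 0)^-1).
split=> [alpha beta eq_even | alpha alpha_neq0].
  by rewrite (eq_path_scale0 eq_even).
by split; [rewrite invr_eq0 path_scale_neq0 | apply: An_iso_path_scale].
Qed.
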